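(* Let $0<\varepsilon<1/7$ be a constant, $p\in(0,1)$, and $G\sim G(n,p)$. Let $H$ be a balanced graph on $m$ vertices ($m$ dividing $n$) with average degree $\alpha$, $2<\alpha<3$. If $m\le\min\!\left(\sqrt{\varepsilon/p},\,2^{-1/4}p^{\alpha/4}\sqrt{\varepsilon n}\right)$ (equivalently $\varepsilon\ge m^2p$ and $\varepsilon^2\ge 2\frac{m^4}{n^2p^{\alpha}}$), then for every $\beta\in[0,1)$, \[\Pr\big[X_H(G)\le\beta\,\mathbb E[X_H(G)]\big]\le\frac{4\varepsilon}{(1-\beta)^2}.\]
   Context: A graph with average degree $\alpha$ is balanced if every induced subgraph has average degree at most $\alpha$. $G(n,p)$ is the Erdős–Rényi random graph on $[n]$. With $H$ on vertex set $[m]$, partition $[n]$ into parts $P_i=\{(i-1)\frac nm+1,\dots,i\frac nm\}$, $1\le i\le m$. $X_H(G)$ is the number of sets $S=\{v_1,\dots,v_m\}$ with $v_i\in P_i$ for all $i$ such that $i\mapsto v_i$ is an isomorphism from $H$ onto the induced subgraph $G[S]$. *)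

From HB Require Import structures.
From mathcomp Require Import all_boot all_order all_algebra.
From mathcomp Require Import reals exp.
Set Implicit Arguments. Unset Strict Implicit. Unset Printing Implicit Defensive.
Import Order.TTheory GRing.Theory Num.Theory.
Local Open Scope ring_scope.

Definition pairs (k : nat) : {set {set 'I_k}} := [set e : {set 'I_k} | #|e| == 2%N].
Definition is_graph (k : nat) (E : {set {set 'I_k}}) : bool := E \subset pairs k.

Definition avg_deg (R : realType) (k : nat) (E : {set {set 'I_k}}) : R :=
  (2 * #|E|)%N%:R / k%:R.

Definition balanced (R : realType) (k : nat) (E : {set {set 'I_k}}) : Prop :=
  forall S : {set 'I_k}, S != set0 ->
    (2 * #|[set e in E | e \subset S]|)%N%:R / #|S|%:R <= avg_deg R E.

Definition gnp_weight (R : realType) (n : nat) (p : R) (E : {set {set 'I_n}}) : R :=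
  p ^+ #|E| * (1 - p) ^+ (#|pairs n| - #|E|)%N.

Definition gnp_prob (R : realType) (n : nat) (p : R) (A : pred {set {set 'I_n}}) : R :=
  \sum_(E in powerset (pairs n) | A E) gnp_weight p E.

Definition gnp_expect (R : realType) (n : nat) (p : R) (X : {set {set 'I_n}} -> nat) : R :=
  \sum_(E in powerset (pairs n)) gnp_weight p E * (X E)%:R.

(* Part P_i (0-indexed) of [n] when the parts have size n/m:
   vertex v (0-indexed) lies in part v %/ (n %/ m). *)
Definition in_part (n m : nat) (i : 'I_m) (v : 'I_n) : bool := ((v %/ (n %/ m))%N == i).

(* X_H(G): number of vertex sets S = {v_1..v_m} with v_i in P_i such that
   i |-> v_i is an isomorphism from H onto G[S]. *)
Definition X_H (n m : nat) (EH : {set {set 'I_m}}) (EG : {set {set 'I_n}}) : nat :=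
  #|[set S : {set 'I_n} | [exists f : {ffun 'I_m -> 'I_n},
      [&& S == f @: [set: 'I_m],
          [forall i, in_part i (f i)] &
          [forall i, forall j, (i != j) ==>
              (([set f i; f j] \in EG) == ([set i; j] \in EH))]]]]|.

From HB Require Import structures.
From mathcomp Require Import all_boot all_order all_algebra.
From mathcomp Require Import reals exp.
From mathcomp Require Import zify ring lra.

(* Second-moment method.  X_H(G) counts the partite maps f : [m] -> [n]
   (f i in P_i) that are induced copies of H; each is one with probability
   q = p^e(H) (1-p)^(C(m,2)-e(H)), so E[X] = q prod_i |P_i|.  Two such maps
   agreeing exactly on a set K can share only the pairs inside K, hence both are
   copies with probability at most q^2 / t_K, t_K = p^(e_H(K)) (1-p)^(C(|K|,2)).
   At most prod_i |P_i| / N^|K| maps agree with a given one on K (N = n/m), so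
   E[X^2] <= E[X]^2 (1 + Z) with Z = sum_(K <> 0) 1 / (t_K N^|K|).  Balancedness
   gives p^(e_H(K)) >= p^(alpha |K| / 2) and m^2 p <= eps gives
   (1-p)^(C(|K|,2)) >= 1/2, so with y = p^(-alpha/2) / N,
   Z <= 2 ((1+y)^m - 1) <= 4 m y <= 4 eps.  Chebyshev's inequality concludes. *)

Set Implicit Arguments. Unset Strict Implicit. Unset Printing Implicit Defensive.
Import Order.TTheory GRing.Theory Num.Theory.
Local Open Scope ring_scope.

Section FiniteSums.
Variables (R : comPzSemiRingType) (T : finType).

Lemma sum_set_prod_mem (F : T -> bool -> R) :
  \sum_(A : {set T}) \prod_x F x (x \in A) = \prod_x (F x true + F x false).
Proof.
under [RHS]eq_bigr do rewrite -big_bool.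
rewrite bigA_distr_bigA /= (reindex (fun A : {set T} => [ffun x => x \in A])) /=.
  by apply: eq_bigr => A _; apply: eq_bigr => x _; rewrite ffunE.
exists (fun g : {ffun T -> bool} => [set x | g x]) => [A _|g _].
  by apply/setP => x; rewrite inE ffunE.
by apply/ffunP => x; rewrite ffunE inE.
Qed.

Lemma prod_nat_forall (b : pred T) : \prod_x ((b x)%:R : R) = [forall x, b x]%:R.
Proof.
have [b_all|/forallPn[x /negbTE bxF]] := boolP [forall x, b x].
  by rewrite big1 // => x _; rewrite (forallP b_all).
by rewrite (bigD1 x) //= bxF mul0r.
Qed.

Lemma expr_card_mul_prod (x y : R) (A B : {set T}) :
  x ^+ #|A| * y ^+ #|B| =
  \prod_t ((if t \in A then x else 1) * (if t \in B then y else 1)).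
Proof. by rewrite big_split /= -!big_mkcond !prodr_const. Qed.

Lemma natr_card_sum (P : pred T) : (#|[set x | P x]|%:R : R) = \sum_x (P x)%:R.
Proof.
rewrite -sum1_card natr_sum big_mkcond /=.
by apply: eq_bigr => x _; rewrite inE; case: (P x).
Qed.

Lemma sum_expr_card (y : R) : \sum_(A : {set T}) y ^+ #|A| = (1 + y) ^+ #|T|.
Proof.
under eq_bigr do rewrite -prodr_const big_mkcond /=.
by rewrite (sum_set_prod_mem (fun _ b => if b then y else 1)) prodr_const addrC.
Qed.

Lemma sum_ffun_prod_mem (I : finType) (S : I -> {set T}) :
  \sum_(g : {ffun I -> T}) \prod_i ((g i \in S i)%:R : R) = \prod_i #|S i|%:R.
Proof.
under [RHS]eq_bigr do rewrite -sum1_card natr_sum big_mkcond /=.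
by rewrite bigA_distr_bigA; apply: eq_bigr => g _; apply: eq_bigr => i _; case: (g i \in S i).
Qed.

End FiniteSums.

Lemma expr_cardU_le (R : numDomainType) (T : finType) (x : R) (A B : {set T}) (k : nat) :
  0 <= x <= 1 -> (#|A :&: B| <= k)%N -> x ^+ #|A :|: B| * x ^+ k <= x ^+ #|A| * x ^+ #|B|.
Proof.
by move=> /andP[x_ge0 x_le1] AB_le; rewrite -!exprD -cardsUI ler_wiXn2l // leq_add2l.
Qed.

Lemma bernoulli_ineq (R : realDomainType) (x : R) (k : nat) :
  x <= 1 -> 1 - k%:R * x <= (1 - x) ^+ k.
Proof.
move=> x_le1; elim: k => [|k IHk]; first by rewrite mul0r subr0 expr0.
have x1_ge0 : 0 <= 1 - x by rewrite subr_ge0.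
have kx2_ge0 : 0 <= k%:R * x ^+ 2 :> R by rewrite mulr_ge0 ?sqr_ge0.
have := ler_wpM2l x1_ge0 IHk; rewrite exprS -natr1; nra.
Qed.

Lemma exprD1_sub1_le (R : realFieldType) (y : R) (m : nat) :
  0 <= y -> m%:R * y <= 2^-1 -> (1 + y) ^+ m - 1 <= 2 * (m%:R * y).
Proof.
move=> y_ge0 my_le.
have geom : (1 + y) ^+ m * (1 - m%:R * y) <= 1.
  elim: m {my_le} => [|m IHm]; first by rewrite expr0 mul0r subr0 mulr1.
  rewrite exprSr -mulrA; apply: le_trans IHm; apply: ler_wpM2l.
    by rewrite exprn_ge0 // addr_ge0.
  have m_ge0 : 0 <= m%:R :> R by rewrite ler0n.
  rewrite -natr1; nra.
set P := (1 + y) ^+ m in geom *; set u := m%:R * y in geom my_le *.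
have P_ge0 : 0 <= P by rewrite exprn_ge0 // addr_ge0.
have u_ge0 : 0 <= u by rewrite mulr_ge0 ?ler0n.
have P_le2 : P <= 2.
  have : 0 <= P * (2^-1 - u) by rewrite mulr_ge0 // subr_ge0.
  nra.
have : 0 <= (2 - P) * u by rewrite mulr_ge0 // subr_ge0.
nra.
Qed.

Lemma second_moment_lower_tail (R : realFieldType) (T : finType) (D : {pred T})
    (w X : T -> R) (mu beta Z : R) :
  (forall t, t \in D -> 0 <= w t) -> \sum_(t in D) w t = 1 ->
  \sum_(t in D) w t * X t = mu ->
  \sum_(t in D) w t * X t ^+ 2 <= mu ^+ 2 * (1 + Z) ->
  0 < mu -> 0 <= beta < 1 ->
  \sum_(t in D | X t <= beta * mu) w t <= Z / (1 - beta) ^+ 2.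
Proof.
move=> w_ge0 w_sum1 mean second mu_gt0 /andP[beta_ge0 beta_lt1].
have gap_gt0 : 0 < (1 - beta) ^+ 2 by rewrite exprn_gt0 // subr_gt0.
have variance : \sum_(t in D) w t * (X t - mu) ^+ 2 <= mu ^+ 2 * Z.
  have -> : \sum_(t in D) w t * (X t - mu) ^+ 2 =
      \sum_(t in D) w t * X t ^+ 2 - 2 * mu * \sum_(t in D) w t * X t
      + mu ^+ 2 * \sum_(t in D) w t.
    rewrite !mulr_sumr -sumrB -big_split /=; apply: eq_bigr => t _; ring.
  by rewrite mean w_sum1; move: second; nra.
have tail : \sum_(t in D | X t <= beta * mu) w t * ((1 - beta) * mu) ^+ 2
    <= \sum_(t in D) w t * (X t - mu) ^+ 2.
  rewrite big_mkcondr /=; apply: ler_sum => t tD.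
  case: ifP => [X_small|_]; last by rewrite mulr_ge0 ?sqr_ge0 ?w_ge0.
  apply: ler_wpM2l; first exact: w_ge0.
  have dev : (1 - beta) * mu <= mu - X t by rewrite mulrBl mul1r lerD2l lerN2.
  have dev_ge0 : 0 <= (1 - beta) * mu by rewrite mulr_ge0 ?subr_ge0 ?ltW.
  by rewrite -[X in _ <= X]sqrrN opprB ler_sqr ?nnegrE // (le_trans dev_ge0).
rewrite ler_pdivlMr // -(ler_pM2r (exprn_gt0 2 mu_gt0)) -mulrA -exprMn mulrC.
rewrite mulr_sumr; under eq_bigr do rewrite mulrC.
by apply: le_trans tail _; apply: le_trans variance _; rewrite mulrC.
Qed.

Lemma sqr_le_of_le_sqrt (R : rcfType) (x a : R) :
  0 <= x -> 0 <= a -> x <= Num.sqrt a -> x ^+ 2 <= a.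
Proof. by move=> x_ge0 a_ge0; rewrite -ler_sqr ?nnegrE ?sqrtr_ge0 // sqr_sqrtr. Qed.

Definition contains_avoids (T : finType) (A B E : {set T}) : bool :=
  (A \subset E) && (B \subset ~: E).

Section GnpProbability.
Variables (R : realType) (n : nat) (p : R).

Lemma gnp_probE (P : pred {set {set 'I_n}}) :
  gnp_prob p P = \sum_(E in powerset (pairs n)) gnp_weight p E * (P E)%:R.
Proof.
rewrite /gnp_prob big_mkcondr /=; apply: eq_bigr => E _.
by case: (P E); rewrite ?mulr1 ?mulr0.
Qed.

Lemma eq_gnp_prob (P Q : pred {set {set 'I_n}}) : P =1 Q -> gnp_prob p P = gnp_prob p Q.
Proof. by move=> PQ; apply: eq_bigl => E; rewrite PQ. Qed.

Lemma gnp_prob_andl (b : bool) (P : pred {set {set 'I_n}}) :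
  gnp_prob p (fun E => b && P E) = b%:R * gnp_prob p P.
Proof. by case: b; rewrite ?mul1r ?mul0r // /gnp_prob big_pred0 // => E; rewrite andbF. Qed.

Lemma gnp_expect_card (I : finType) (P : I -> pred {set {set 'I_n}}) :
  gnp_expect p (fun E => #|[set x | P x E]|) = \sum_x gnp_prob p (P x).
Proof.
rewrite /gnp_expect; under eq_bigr do rewrite natr_card_sum mulr_sumr.
by rewrite exchange_big; apply: eq_bigr => x _; rewrite gnp_probE.
Qed.

(* The G(n,p) weight as a product over all 2-sets: non-pairs are forced out of E. *)
Definition pair_weight (x : {set 'I_n}) (b : bool) : R :=
  if x \in pairs n then (if b then p else 1 - p) else (if b then 0 else 1).

Lemma gnp_sum_prod (phi : {set {set 'I_n}} -> R) :
  \sum_(E in powerset (pairs n)) gnp_weight p E * phi E =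
  \sum_(E : {set {set 'I_n}}) (\prod_x pair_weight x (x \in E)) * phi E.
Proof.
rewrite big_mkcond /=; apply: eq_bigr => E _; rewrite powersetE.
have [E_pairs|/subsetPn[x xE /negbTE x_nonpair]] := boolP (E \subset pairs n); last first.
  by rewrite (bigD1 x) //= /pair_weight xE x_nonpair !mul0r.
congr (_ * _); rewrite /gnp_weight.
have -> : (#|pairs n| - #|E|)%N = #|pairs n :\: E| by rewrite cardsD (setIidPr E_pairs).
rewrite expr_card_mul_prod; apply: eq_bigr => x _.
rewrite /pair_weight in_setD; case: (boolP (x \in E)) => xE /=.
  by rewrite (subsetP E_pairs x xE) mulr1.
by case: (x \in pairs n); rewrite ?mul1r.
Qed.

Lemma gnp_prob_contains_avoidsE (A B : {set {set 'I_n}}) :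
  gnp_prob p (contains_avoids A B) =
  \prod_x (pair_weight x true * (x \notin B)%:R + pair_weight x false * (x \notin A)%:R).
Proof.
rewrite gnp_probE gnp_sum_prod.
transitivity (\sum_(E : {set {set 'I_n}}) \prod_x (pair_weight x (x \in E) *
    (((x \in A) ==> (x \in E)) && ((x \in B) ==> (x \notin E)))%:R)).
  apply: eq_bigr => E _; rewrite big_split /= prod_nat_forall /contains_avoids.
  congr (_ * _%:R); congr (nat_of_bool _).
  apply/idP/forallP => [/andP[/subsetP AE /subsetP BE] x|AB].
    apply/andP; split; apply/implyP; first exact: AE.
    by move/BE; rewrite inE.
  apply/andP; split; apply/subsetP => x; have /andP[/implyP Ax /implyP Bx] := AB x.
    exact: Ax.
  by rewrite inE => /Bx.
rewrite (sum_set_prod_mem (fun x b => pair_weight x b *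
  (((x \in A) ==> b) && ((x \in B) ==> ~~ b))%:R)).
by apply: eq_bigr => x _; rewrite /= !implybT !implybF andbT.
Qed.

Lemma gnp_prob_contains_avoids_le (A B : {set {set 'I_n}}) :
  0 <= p <= 1 -> A \subset pairs n -> B \subset pairs n ->
  gnp_prob p (contains_avoids A B) <= p ^+ #|A| * (1 - p) ^+ #|B|.
Proof.
move=> /andP[p_ge0 p_le1] /subsetP A_pairs /subsetP B_pairs.
have q_ge0 : 0 <= 1 - p by rewrite subr_ge0.
rewrite gnp_prob_contains_avoidsE expr_card_mul_prod.
apply: ler_prod => x _; rewrite /pair_weight.
case: (boolP (x \in A)) => xA; case: (boolP (x \in B)) => xB /=;
  rewrite ?(A_pairs x xA) ?(B_pairs x xB) !(mulr1, mulr0, mul1r, addr0, add0r)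
          ?lexx ?andbT ?mulr_ge0 //.
by case: (x \in pairs n); rewrite ?subrKC ?add0r ?lexx ?ler01.
Qed.

Lemma gnp_prob_contains_avoids (A B : {set {set 'I_n}}) :
  A \subset pairs n -> B \subset pairs n -> [disjoint A & B] ->
  gnp_prob p (contains_avoids A B) = p ^+ #|A| * (1 - p) ^+ #|B|.
Proof.
move=> /subsetP A_pairs /subsetP B_pairs /disjointFr AB.
rewrite gnp_prob_contains_avoidsE expr_card_mul_prod.
apply: eq_bigr => x _; rewrite /pair_weight.
case: (boolP (x \in A)) => xA; case: (boolP (x \in B)) => xB /=.
- by rewrite AB in xB.
- by rewrite (A_pairs x xA) !(mulr1, mulr0, mul1r, addr0).
- by rewrite (B_pairs x xB) !(mulr1, mulr0, mul1r, add0r).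
- by case: (x \in pairs n); rewrite !(mulr1, mul1r) ?subrKC ?add0r.
Qed.

Lemma gnp_weight_ge0 (E : {set {set 'I_n}}) : 0 <= p <= 1 -> 0 <= gnp_weight p E.
Proof. by case/andP => p_ge0 p_le1; rewrite mulr_ge0 ?exprn_ge0 ?subr_ge0. Qed.

Lemma gnp_weight_sum : \sum_(E in powerset (pairs n)) gnp_weight p E = 1.
Proof.
have disj0 : [disjoint set0 & set0 : {set {set 'I_n}}] by rewrite -setI_eq0 setI0.
have := gnp_prob_contains_avoids (sub0set _) (sub0set _) disj0.
rewrite cards0 !expr0 mulr1 gnp_probE => <-.
by apply: eq_bigr => E _; rewrite /contains_avoids !sub0set mulr1.
Qed.

Lemma gnp_lower_tail (X : {set {set 'I_n}} -> nat) (beta Z : R) :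
  0 <= p <= 1 -> 0 < gnp_expect p X ->
  gnp_expect p (fun E => X E ^ 2)%N <= gnp_expect p X ^+ 2 * (1 + Z) ->
  0 <= beta < 1 ->
  gnp_prob p (fun E => (X E)%:R <= beta * gnp_expect p X) <= Z / (1 - beta) ^+ 2.
Proof.
move=> p01 mu_gt0 second beta01.
apply: second_moment_lower_tail => //.
- by move=> E _; apply: gnp_weight_ge0.
- exact: gnp_weight_sum.
- by move: second; rewrite /gnp_expect; under eq_bigr do rewrite natrX.
Qed.

End GnpProbability.

Definition edges_in (T : finType) (D : {set {set T}}) (K : {set T}) : nat :=
  #|[set e in D | e \subset K]|.

Definition part_set (n : nat) {m : nat} (i : 'I_m) : {set 'I_n} := [set v | in_part i v].

Section PartiteCopies.
Variables (n m : nat).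
Implicit Types (f g : {ffun 'I_m -> 'I_n}) (EH D : {set {set 'I_m}}).

Definition partite f : bool := [forall i, in_part i (f i)].

Definition induced_copy EH f (EG : {set {set 'I_n}}) : bool :=
  [forall i, forall j, (i != j) ==> (([set f i; f j] \in EG) == ([set i; j] \in EH))].

Definition pair_image f D : {set {set 'I_n}} := [set f @: e | e : {set 'I_m} in D].

Definition agree f g : {set 'I_m} := [set i | f i == g i].

Lemma partite_index f g i j : partite f -> partite g -> f i = g j -> i = j.
Proof.
move=> /forallP f_part /forallP g_part fg; apply: val_inj.
by have := f_part i; rewrite /in_part fg (eqP (g_part j)) => /eqP.
Qed.

Lemma partite_inj f : partite f -> injective f.
Proof. by move=> f_part i j; apply: partite_index. Qed.

Lemma X_H_card EH (EG : {set {set 'I_n}}) :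
  X_H EH EG = #|[set f | partite f && induced_copy EH f EG]|.
Proof.
set copies := [set f | _].
rewrite /X_H -(@card_in_imset _ _ (fun f => f @: [set: 'I_m]) copies).
  apply: eq_card => S; rewrite inE.
  apply/existsP/imsetP => [[f /and3P[/eqP -> f_part f_copy]]|[f]].
    by exists f => //; rewrite inE; apply/andP.
  by rewrite inE => /andP[f_part f_copy] ->; exists f; apply/and3P.
move=> f g; rewrite !inE => /andP[f_part _] /andP[g_part _] fg; apply/ffunP => i.
have /imsetP[j _ fij] : f i \in g @: [set: 'I_m] by rewrite -fg imset_f.
by rewrite fij (partite_index f_part g_part fij).
Qed.

Lemma induced_copyE EH f (EG : {set {set 'I_n}}) : is_graph EH ->
  induced_copy EH f EG =
  contains_avoids (pair_image f EH) (pair_image f (pairs m :\: EH)) EG.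
Proof.
move=> /subsetP EH_pairs; have f_pair i j : f @: [set i; j] = [set f i; f j].
  by rewrite imsetU1 imset_set1.
apply/forallP/andP => [copy|[/subsetP sub_EG /subsetP sub_coEG] i].
  split; apply/subsetP => _ /imsetP[e + ->].
    move=> eEH; have := EH_pairs e eEH; rewrite inE => /cards2P[i [j [ij e_ij]]]; subst e.
    by have /forallP/(_ j) := copy i; rewrite ij f_pair eEH => /eqP ->.
  rewrite !inE => /andP[eEH /cards2P[i [j [ij e_ij]]]]; subst e.
  by have /forallP/(_ j) := copy i; rewrite ij f_pair (negbTE eEH) => /eqP ->.
apply/forallP => j; apply/implyP => ij; rewrite -f_pair.
have [eEH|eEH] := boolP ([set i; j] \in EH).
  by rewrite sub_EG //; apply: imset_f.
have : f @: [set i; j] \in pair_image f (pairs m :\: EH).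
  by apply: imset_f; rewrite !inE eEH; apply/cards2P; exists i, j.
by move/sub_coEG; rewrite inE => /negbTE ->.
Qed.

Lemma card_pair_image f D : injective f -> #|pair_image f D| = #|D|.
Proof. by move=> f_inj; rewrite card_imset //; apply: imset_inj. Qed.

Lemma pair_image_pairs f D : injective f -> D \subset pairs m ->
  pair_image f D \subset pairs n.
Proof.
move=> f_inj /subsetP D_pairs; apply/subsetP => _ /imsetP[e eD ->].
by have := D_pairs e eD; rewrite !inE card_imset.
Qed.

Lemma disjoint_pair_image f (D D' : {set {set 'I_m}}) : injective f -> [disjoint D & D'] ->
  [disjoint pair_image f D & pair_image f D'].
Proof.
move=> f_inj; rewrite -!setI_eq0 => /eqP DD'; apply/eqP/setP => x; rewrite !inE.
apply/negbTE/andP => -[/imsetP[e eD ->] /imsetP[e' eD' /(imset_inj f_inj) ee']].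
by move/setP/(_ e): DD'; rewrite !inE eD ee' eD'.
Qed.

Lemma pair_imageI_sub f g (D D' : {set {set 'I_m}}) : partite f -> partite g ->
  pair_image f D :&: pair_image g D' \subset
  pair_image f [set e in D | e \subset agree f g].
Proof.
move=> f_part g_part; apply/subsetP => x.
rewrite inE => /andP[/imsetP[e eD ->] /imsetP[e' _ fe_ge']].
apply: imset_f; rewrite inE eD; apply/subsetP => i ie; rewrite inE.
have /imsetP[j _ fij] : f i \in g @: e' by rewrite -fe_ge' imset_f.
by rewrite fij (partite_index f_part g_part fij).
Qed.

End PartiteCopies.

Lemma card_part_set (n m : nat) (i : 'I_m) :
  (m %| n)%N -> (n %/ m <= #|part_set n i|)%N.
Proof.
move=> /dvdnP[N ->]; have m_gt0 : (0 < m)%N by apply: leq_ltn_trans (ltn_ord i).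
rewrite mulnK //.
have vertex_lt (j : 'I_N) : (i * N + j < N * m)%N.
  by have := ltn_ord i; have := ltn_ord j; nia.
pose v j := Ordinal (vertex_lt j).
have v_inj : injective v by move=> j k [/eqP]; rewrite eqn_add2l => /eqP/val_inj.
rewrite -[X in (X <= _)%N]card_ord -(card_imset _ v_inj).
apply/subset_leq_card/subsetP => _ /imsetP[j _ ->].
have N_gt0 : (0 < N)%N by apply: leq_ltn_trans (ltn_ord j).
by rewrite inE /in_part mulnK //= divnMDl // divn_small ?addn0.
Qed.

Section CountingPartiteMaps.
Variables (R : comPzSemiRingType) (n m : nat).

Lemma sum_partite_maps :
  \sum_(g : {ffun 'I_m -> 'I_n}) ((partite g)%:R : R) = \prod_(i : 'I_m) #|part_set n i|%:R.
Proof.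
rewrite -sum_ffun_prod_mem; apply: eq_bigr => g _; rewrite prod_nat_forall.
by congr (nat_of_bool _)%:R; apply: eq_forallb => i; rewrite inE.
Qed.

Lemma sum_partite_agree (f : {ffun 'I_m -> 'I_n}) (K : {set 'I_m}) : partite f ->
  \sum_(g : {ffun 'I_m -> 'I_n}) ((partite g && (K \subset agree f g))%:R : R) =
  \prod_i (if i \in K then 1 else #|part_set n i|%:R).
Proof.
move=> /forallP f_part; pose S i := if i \in K then [set f i] else part_set n i.
transitivity (\sum_(g : {ffun 'I_m -> 'I_n}) \prod_i ((g i \in S i)%:R : R)).
  apply: eq_bigr => g _; rewrite prod_nat_forall; congr (nat_of_bool _)%:R.
  apply/andP/forallP => [[/forallP g_part /subsetP Kfg] i|gS].
    rewrite /S; case: ifP => iK; last by rewrite inE g_part.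
    by have := Kfg i iK; rewrite !inE eq_sym.
  split; first apply/forallP => i.
    by have := gS i; rewrite /S; case: ifP => _; rewrite inE // => /eqP ->.
  by apply/subsetP => i iK; have := gS i; rewrite /S iK !inE eq_sym.
by rewrite sum_ffun_prod_mem; apply: eq_bigr => i _; rewrite /S; case: ifP; rewrite ?cards1.
Qed.

End CountingPartiteMaps.

Lemma prod_omit_le (R : realFieldType) (I : finType) (a : I -> R) (N : R) (K : {set I}) :
  0 < N -> (forall i, N <= a i) ->
  \prod_i (if i \in K then 1 else a i) <= (\prod_i a i) / N ^+ #|K|.
Proof.
move=> N_gt0 N_le; rewrite ler_pdivlMr ?exprn_gt0 // -prodr_const [X in _ * X <= _]big_mkcond.
rewrite -big_split /=.
apply: ler_prod => i _; case: (i \in K); rewrite ?mul1r ?mulr1 ?N_le ?(ltW N_gt0) //=.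
by rewrite lexx andbT (le_trans (ltW N_gt0)).
Qed.

Lemma card_pairs_le (m : nat) : (#|pairs m| <= m ^ 2)%N.
Proof.
rewrite /pairs card_draws card_ord bin2 leq_half_double.
by case: m => // m /=; nia.
Qed.

Definition overlap_weight (R : realType) (m : nat) (p : R) (EH : {set {set 'I_m}})
    (K : {set 'I_m}) : R :=
  p ^+ edges_in EH K * (1 - p) ^+ edges_in (pairs m) K.

Definition overlap_sum (R : realType) (m : nat) (p : R) (EH : {set {set 'I_m}}) (N : R) : R :=
  \sum_(K : {set 'I_m} | K != set0) (overlap_weight p EH K * N ^+ #|K|)^-1.

Section SecondMoment.
Variables (R : realType) (n m : nat) (p : R) (EH : {set {set 'I_m}}).
Hypotheses (p01 : 0 < p < 1) (EH_graph : is_graph EH).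
Local Notation mapT := {ffun 'I_m -> 'I_n}.
Implicit Types (f g : mapT) (K : {set 'I_m}).

Lemma overlap_weight_gt0 K : 0 < overlap_weight p EH K.
Proof. by case/andP: p01 => p_gt0 p_lt1; rewrite mulr_gt0 ?exprn_gt0 ?subr_gt0. Qed.

Lemma overlap_weight_set0 : overlap_weight p EH set0 = 1.
Proof.
have no_pair (D : {set {set 'I_m}}) : D \subset pairs m -> edges_in D set0 = 0%N.
  move=> /subsetP D_pairs; apply/eqP; rewrite cards_eq0; apply/eqP/setP => e.
  rewrite !inE subset0; apply/negbTE/andP => -[/D_pairs]; rewrite inE.
  by move=> /eqP card_e /eqP e0; rewrite e0 cards0 in card_e.
by rewrite /overlap_weight !no_pair ?expr0 ?mulr1.
Qed.

Lemma inv_overlap_weight_le (A : {set 'I_m}) :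
  (overlap_weight p EH A)^-1 <=
  1 + \sum_(K | K != set0) (K \subset A)%:R / overlap_weight p EH K.
Proof.
have terms_ge0 (P : pred {set 'I_m}) :
    0 <= \sum_(K | P K) (K \subset A)%:R / overlap_weight p EH K.
  by apply: sumr_ge0 => K _; rewrite divr_ge0 ?ler0n ?ltW ?overlap_weight_gt0.
have [{1}->|A0] := eqVneq A set0.
  by rewrite overlap_weight_set0 invr1 lerDl.
by rewrite (bigD1 A) //= subxx div1r addrCA lerDl addr_ge0.
Qed.

Lemma gnp_prob_induced_copy f : partite f -> gnp_prob p (induced_copy EH f) = gnp_weight p EH.
Proof.
move=> f_part; have f_inj := partite_inj f_part.
have disj : [disjoint EH & pairs m :\: EH] by rewrite -setI_eq0 setIDA setDIl setDv set0I.
rewrite (eq_gnp_prob _ (fun E => induced_copyE f E EH_graph)).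
rewrite gnp_prob_contains_avoids ?pair_image_pairs ?disjoint_pair_image ?subsetDl //.
by rewrite !card_pair_image // cardsD (setIidPr EH_graph).
Qed.

(* Each copy fixes the status of the images of all pairs of ['I_m]; the images
   under f and g meet only in images of pairs inside [agree f g]. *)
Lemma gnp_prob_induced_copies_le f g : partite f -> partite g ->
  gnp_prob p (fun E => induced_copy EH f E && induced_copy EH g E) <=
  gnp_weight p EH ^+ 2 / overlap_weight p EH (agree f g).
Proof.
move=> f_part g_part; have [p_gt0 p_lt1] := andP p01.
have [f_inj g_inj] := (partite_inj f_part, partite_inj g_part).
have EHf := card_pair_image EH f_inj; have EHg := card_pair_image EH g_inj.
set co := pairs m :\: EH; have co_pairs : co \subset pairs m by apply: subsetDl.
have cof := card_pair_image co f_inj; have cog := card_pair_image co g_inj.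
have meet D := subset_leq_card (pair_imageI_sub D D f_part g_part).
rewrite ler_pdivlMr ?overlap_weight_gt0 //.
rewrite (eq_gnp_prob _ (_ : _ =1 contains_avoids (pair_image f EH :|: pair_image g EH)
                                             (pair_image f co :|: pair_image g co))); last first.
  by move=> E; rewrite !induced_copyE // /contains_avoids !subUset; do 4!case: (_ \subset _).
apply: le_trans (ler_wpM2r (ltW (overlap_weight_gt0 _)) (gnp_prob_contains_avoids_le _ _ _)) _.
- by rewrite (ltW p_gt0) (ltW p_lt1).
- by rewrite subUset !pair_image_pairs.
- by rewrite subUset !pair_image_pairs.
rewrite /gnp_weight /overlap_weight expr2 mulrACA [in X in _ <= X]mulrACA.
have -> : (#|pairs m| - #|EH|)%N = #|co| by rewrite cardsD (setIidPr EH_graph).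
have q_ge0 : 0 <= 1 - p by rewrite subr_ge0 ltW.
apply: ler_pM; rewrite ?mulr_ge0 ?exprn_ge0 ?(ltW p_gt0) //.
  rewrite -{1}EHf -EHg; apply: expr_cardU_le; first by rewrite !ltW.
  by rewrite (leq_trans (meet _)) ?card_pair_image.
rewrite -{1}cof -cog; apply: expr_cardU_le; first by rewrite subr_ge0 gerBl !ltW.
rewrite (leq_trans (meet _)) ?card_pair_image //.
by apply/subset_leq_card/subsetP => e; rewrite !inE => /andP[/andP[_ ->] ->].
Qed.

Lemma gnp_expect_X_H :
  gnp_expect p (@X_H n m EH) = (\prod_(i : 'I_m) #|part_set n i|%:R) * gnp_weight p EH.
Proof.
have -> : gnp_expect p (@X_H n m EH) =
    gnp_expect p (fun E => #|[set f : mapT | partite f && induced_copy EH f E]|).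
  by apply: eq_bigr => E _; rewrite X_H_card.
rewrite gnp_expect_card -sum_partite_maps mulr_suml; apply: eq_bigr => f _.
rewrite gnp_prob_andl; have [f_part|_] := boolP (partite f); last by rewrite !mul0r.
by rewrite gnp_prob_induced_copy.
Qed.

Lemma gnp_expect_X_H_sqr :
  gnp_expect p (fun E => @X_H n m EH E ^ 2)%N =
  \sum_(f : mapT) \sum_(g : mapT) gnp_prob p (fun E =>
    (partite f && induced_copy EH f E) && (partite g && induced_copy EH g E)).
Proof.
rewrite pair_bigA -gnp_expect_card; apply: eq_bigr => E _.
by rewrite X_H_card -mulnn -cardsX; congr (_ * _%:R); apply: eq_card => -[f g]; rewrite !inE.
Qed.

Lemma sum_gnp_prob_induced_copies_le f (N : R) :
  partite f -> 0 < N -> (forall i : 'I_m, N <= #|part_set n i|%:R) ->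
  \sum_(g : mapT) gnp_prob p (fun E => induced_copy EH f E && (partite g && induced_copy EH g E)) <=
  gnp_weight p EH ^+ 2 * (\prod_(i : 'I_m) #|part_set n i|%:R) * (1 + overlap_sum p EH N).
Proof.
move=> f_part N_gt0 N_le; have [p_gt0 p_lt1] := andP p01.
have q2_ge0 : 0 <= gnp_weight p EH ^+ 2 by rewrite exprn_ge0 ?gnp_weight_ge0 ?ltW.
have t_ge0 K : 0 <= (overlap_weight p EH K)^-1 by rewrite invr_ge0 (ltW (overlap_weight_gt0 K)).
have split_g g : gnp_prob p (fun E => induced_copy EH f E && (partite g && induced_copy EH g E))
    <= gnp_weight p EH ^+ 2 * ((partite g)%:R +
       \sum_(K | K != set0) (partite g && (K \subset agree f g))%:R / overlap_weight p EH K).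
  rewrite (eq_gnp_prob _ (_ : _ =1 fun E => partite g &&
    (induced_copy EH f E && induced_copy EH g E))); last by move=> E; rewrite andbCA.
  rewrite gnp_prob_andl; have [g_part|_] := boolP (partite g); last first.
    by rewrite mul0r add0r big1 ?mulr0 // => K _; rewrite mul0r.
  rewrite mul1r; apply: le_trans (gnp_prob_induced_copies_le f_part g_part) _.
  by rewrite /= ler_wpM2l //; apply: inv_overlap_weight_le.
apply: le_trans (ler_sum _ (fun g _ => split_g g)) _.
rewrite -mulr_sumr -mulrA ler_wpM2l // big_split /= sum_partite_maps mulrDr mulr1 lerD2l.
rewrite exchange_big /= /overlap_sum mulr_sumr; apply: ler_sum => K _.
rewrite -mulr_suml sum_partite_agree // (invfM (overlap_weight p EH K)) mulrCA.
rewrite [X in X <= _]mulrC ler_wpM2l //.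
exact: prod_omit_le.
Qed.

Lemma gnp_expect_X_H_sqr_le (N : R) :
  0 < N -> (forall i : 'I_m, N <= #|part_set n i|%:R) ->
  gnp_expect p (fun E => @X_H n m EH E ^ 2)%N <=
  gnp_expect p (@X_H n m EH) ^+ 2 * (1 + overlap_sum p EH N).
Proof.
move=> N_gt0 N_le; rewrite gnp_expect_X_H_sqr gnp_expect_X_H.
apply: le_trans (_ : _ <= \sum_(f : mapT) (partite f)%:R *
  (gnp_weight p EH ^+ 2 * (\prod_(i : 'I_m) #|part_set n i|%:R) * (1 + overlap_sum p EH N))) _.
  apply: ler_sum => f _.
  under eq_bigr do rewrite (eq_gnp_prob _ (fun E => esym (andbA _ _ _))) gnp_prob_andl.
  rewrite -mulr_sumr; have [f_part|_] := boolP (partite f); last by rewrite !mul0r.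
  by rewrite !mul1r sum_gnp_prob_induced_copies_le.
rewrite -mulr_suml sum_partite_maps le_eqVlt; apply/orP; left; apply/eqP; ring.
Qed.

Lemma overlap_weight_ge (eps : R) K :
  balanced R EH -> K != set0 -> m%:R ^+ 2 * p <= eps -> eps <= 2^-1 ->
  (p `^ (avg_deg R EH / 4)) ^+ (2 * #|K|) / 2 <= overlap_weight p EH K.
Proof.
move=> EH_bal K0 mmp eps_le; have [p_gt0 p_lt1] := andP p01.
apply: ler_pM; rewrite ?exprn_ge0 ?powR_ge0 ?invr_ge0 //.
  have := EH_bal K K0; rewrite ler_pdivrMr ?ltr0n ?card_gt0 // => edges_le.
  rewrite -powR_mulrn ?powR_ge0 // -powRrM -powR_mulrn ?(ltW p_gt0) //.
  apply: ger_powR; first by rewrite p_gt0 (ltW p_lt1).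
  by rewrite natrM; move: edges_le; rewrite natrM; lra.
have pairs_le : (edges_in (pairs m) K <= m ^ 2)%N.
  apply: leq_trans (card_pairs_le m); apply: subset_leq_card.
  by apply/subsetP => e; rewrite inE => /andP[].
apply: le_trans (bernoulli_ineq _ (ltW p_lt1)).
have : (edges_in (pairs m) K)%:R * p <= m%:R ^+ 2 * p :> R.
  by rewrite ler_wpM2r ?(ltW p_gt0) // -natrX ler_nat.
lra.
Qed.

Lemma overlap_sum_le (eps N : R) :
  balanced R EH -> m%:R ^+ 2 * p <= eps -> eps <= 2^-1 -> 0 < N ->
  m%:R <= eps * (p `^ (avg_deg R EH / 4)) ^+ 2 * N ->
  overlap_sum p EH N <= 4 * eps.
Proof.
move=> EH_bal mmp eps_le N_gt0 m_le; set c := p `^ (avg_deg R EH / 4).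
have cN_gt0 : 0 < c ^+ 2 * N by rewrite mulr_gt0 ?exprn_gt0 ?powR_gt0 ?(andP p01).1.
set y := (c ^+ 2 * N)^-1; have y_ge0 : 0 <= y by rewrite invr_ge0 ltW.
have my_le : m%:R * y <= eps by rewrite ler_pdivrMr // mulrA.
have term_le K : K != set0 -> (overlap_weight p EH K * N ^+ #|K|)^-1 <= 2 * y ^+ #|K|.
  move=> K0; have -> : 2 * y ^+ #|K| = ((c ^+ 2 * N) ^+ #|K| / 2)^-1.
    by rewrite invfM invrK /y exprVn mulrC.
  have rhs_gt0 : 0 < overlap_weight p EH K * N ^+ #|K|.
    by rewrite mulr_gt0 ?overlap_weight_gt0 ?exprn_gt0.
  rewrite lef_pV2 ?posrE ?divr_gt0 ?exprn_gt0 //.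
  rewrite exprMn -exprM mulrAC ler_wpM2r ?exprn_ge0 ?(ltW N_gt0) //.
  exact: overlap_weight_ge EH_bal K0 mmp eps_le.
apply: le_trans (ler_sum _ term_le) _; rewrite -mulr_sumr.
have -> : \sum_(K : {set 'I_m} | K != set0) y ^+ #|K| = (1 + y) ^+ m - 1.
  have := sum_expr_card 'I_m y; rewrite card_ord (bigD1 set0) //= cards0 expr0 => <-.
  by rewrite addrC addrK.
have := exprD1_sub1_le y_ge0 (le_trans my_le eps_le); lra.
Qed.

End SecondMoment.

Lemma part_size_bounds (R : realType) (eps c : R) (n m : nat) :
  0 < eps -> 0 < c -> (0 < m)%N -> (m %| n)%N ->
  m%:R <= 2 `^ (- 4^-1) * c * Num.sqrt (eps * n%:R) ->
  0 < (n %/ m)%:R :> R /\ m%:R <= eps * c ^+ 2 * (n %/ m)%:R.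
Proof.
move=> eps_gt0 c_gt0 m_gt0 m_dvd_n m_le; have m_pos : 0 < m%:R :> R by rewrite ltr0n.
have root_le1 : 2 `^ (- 4^-1) <= 1 :> R.
  rewrite -[X in _ <= X](powRr0 2) ler_powR ?ler1n //.
  by rewrite oppr_le0 invr_ge0.
have m_le' : m%:R / c <= Num.sqrt (eps * n%:R).
  rewrite ler_pdivrMr // mulrC; apply: le_trans m_le _.
  by rewrite ler_wpM2r ?sqrtr_ge0 // ler_piMl // ltW.
have mm_le : m%:R ^+ 2 <= c ^+ 2 * (eps * n%:R).
  have en_ge0 : 0 <= eps * n%:R by rewrite mulr_ge0 ?ler0n ?ltW.
  have := sqr_le_of_le_sqrt (divr_ge0 (ltW m_pos) (ltW c_gt0)) en_ge0 m_le'.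
  by rewrite expr_div_n ler_pdivrMr ?exprn_gt0 // [X in _ <= X]mulrC.
have N_eq : (n %/ m)%:R = n%:R / m%:R :> R by rewrite natf_div.
split.
  rewrite N_eq divr_gt0 //.
  have := lt_le_trans (exprn_gt0 2 m_pos) mm_le.
  by rewrite pmulr_rgt0 ?exprn_gt0 // pmulr_rgt0.
rewrite N_eq mulrA ler_pdivlMr // -expr2.
by apply: le_trans mm_le _; rewrite mulrCA mulrA.
Qed.

Unset Implicit Arguments.

Theorem lemmaC1 (R : realType) (eps p beta : R) (n m : nat)
    (EH : {set {set 'I_m}}) :
  0 < eps -> eps < 7^-1 ->
  0 < p -> p < 1 ->
  (0 < m)%N -> (m %| n)%N ->
  is_graph EH -> balanced R EH ->
  2 < avg_deg R EH -> avg_deg R EH < 3 ->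
  m%:R <= Num.sqrt (eps / p) ->
  m%:R <= 2 `^ (- 4^-1) * p `^ (avg_deg R EH / 4) * Num.sqrt (eps * n%:R) ->
  0 <= beta -> beta < 1 ->
  gnp_prob (n:=n) p (fun EG => (X_H EH EG)%:R <= beta * gnp_expect p (@X_H n m EH))
    <= 4 * eps / (1 - beta) ^+ 2.
Proof.
move=> eps_gt0 eps_lt p_gt0 p_lt1 m_gt0 m_dvd_n EH_graph EH_bal _ _ m_le_sqrt m_le_root
  beta_ge0 beta_lt1.
have p01 : 0 < p < 1 by rewrite p_gt0.
have [N_gt0 m_le] := part_size_bounds eps_gt0 (powR_gt0 _ p_gt0) m_gt0 m_dvd_n m_le_root.
have mmp : m%:R ^+ 2 * p <= eps.
  rewrite -ler_pdivlMr //.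
  by apply: sqr_le_of_le_sqrt m_le_sqrt; rewrite ?ler0n ?divr_ge0 ?ltW.
have part_ge (i : 'I_m) : (n %/ m)%:R <= #|part_set n i|%:R :> R.
  by rewrite ler_nat card_part_set.
have mu_gt0 : 0 < gnp_expect p (@X_H n m EH).
  rewrite gnp_expect_X_H // mulr_gt0 ?prodr_gt0 // => [i _|].
    exact: lt_le_trans N_gt0 (part_ge i).
  by rewrite mulr_gt0 ?exprn_gt0 ?subr_gt0.
apply: le_trans (gnp_lower_tail _ mu_gt0 (gnp_expect_X_H_sqr_le p01 EH_graph N_gt0 part_ge) _) _.
- by rewrite !ltW.
- by rewrite beta_ge0.
rewrite ler_wpM2r ?invr_ge0 ?exprn_ge0 ?subr_ge0 ?(ltW beta_lt1) //.
apply: overlap_sum_le => //; lra.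
Qed.
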